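(* Let $G$ be a finite group and let $\pi(G)$ denote the set of prime divisors of $|G|$. Then $G$ is supersoluble if and only if for every prime $p\in\pi(G)$ there exists a supersoluble subgroup $H\le G$ with $|G:H|=p$.
   Context: All groups are finite. A group is supersoluble if it has a normal series with all factors cyclic of prime order (equivalently, a chief series with all chief factors of prime order). *)

From mathcomp Require Import all_boot all_fingroup all_solvable.
Set Implicit Arguments. Unset Strict Implicit. Unset Printing Implicit Defensive.
Local Open Scope group_scope.

Definition ss_step (gT : finGroupType) (G : {set gT}) (H K : {group gT}) : bool :=
  [&& H <| G, K <| G, H \subset K & prime #|K : H|].

Definition supersoluble (gT : finGroupType) (G : {set gT}) : Prop :=
  exists s : seq {group gT},
    path (ss_step G) 1%G s /\ (last 1%G s : {set gT}) = G.

From mathcomp Require Import all_boot all_fingroup all_solvable.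
Set Implicit Arguments. Unset Strict Implicit. Unset Printing Implicit Defensive.
Local Open Scope group_scope.

(* Subgroups and quotients of supersoluble groups are supersoluble, and the
   normal series of a supersoluble G passes through a normal M with
   |G : M|_p = p; with a Hall p'-subgroup L, the subgroup ML has index p.
   Conversely, induct on |G|.  For the largest prime p dividing |G|, Sylow
   p-subgroups of supersoluble groups are normal; applied to a supersoluble
   subgroup of prime index q < p, and since the number of Sylow p-subgroups
   of G divides q and is 1 mod p, the Sylow p-subgroup P of G is normal.  If
   |P| = p take N = P.  Otherwise, for H supersoluble of index p, P :&: H is
   maximal in P, hence meets Z(P), and a normal subgroup N of H of prime
   order inside H :&: Z(P) is normalised by PH = G.  Subgroups of prime
   index other than p contain P, hence N, so G/N inherits the hypothesis and
   is supersoluble; as |N| is prime, so is G. *)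

Section SupersolubleSeries.

Variable gT : finGroupType.
Implicit Types (A G H K N W x y : {group gT}).

Lemma indexgI_dvdn A x y :
  x \subset y -> y \subset 'N(x) -> (#|A :&: y : A :&: x| %| #|y : x|)%N.
Proof.
move=> sxy nxy; have nAyx : A :&: y \subset 'N(x) by rewrite subIset ?nxy ?orbT.
have -> : A :&: x = A :&: y :&: x by rewrite -setIA (setIidPr sxy).
rewrite indexgI -indexMg -norm_joinEr // indexSg ?joing_subl //.
by rewrite join_subG sxy subIset ?subxx ?orbT.
Qed.

Lemma dvdn_prime_eq1_or_prime d p : prime p -> (d %| p)%N -> (d == 1%N) || prime d.
Proof.
move=> pr_p; case/primeP: (pr_p) => _ dvdP /dvdP/orP[->|/eqP->] //.
by rewrite pr_p orbT.
Qed.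

(* Intersecting an [ss_step] series with a subgroup, or taking its quotient,
   may repeat terms. *)
Definition ss_wstep (G : {set gT}) H K : bool :=
  [&& H <| G, K <| G, H \subset K & (#|K : H| == 1%N) || prime #|K : H|].

Lemma ss_wstep_compress (G : {set gT}) x s : path (ss_wstep G) x s ->
  exists2 s', path (ss_step G) x s' & (last x s' : {set gT}) = last x s.
Proof.
elim: s x => [|y s IHs] x /=; first by exists [::].
case/andP=> /and4P[nxG nyG sxy /orP[ixy | pr_ixy]] /IHs[s' ps' ls'].
  suff -> : x = y by exists s'.
  by apply: val_inj; apply/eqP; rewrite eqEsubset sxy -indexg_eq1.
by exists (y :: s') => //=; rewrite /ss_step nxG nyG sxy pr_ixy.
Qed.

Lemma supersoluble_wseries G s :
  path (ss_wstep G) 1%G s -> (last 1%G s : {set gT}) = G -> supersoluble G.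
Proof. by case/ss_wstep_compress=> s' ps' ls' lsG; exists s'; rewrite ls'. Qed.

Lemma supersolubleS G H : H \subset G -> supersoluble G -> supersoluble H.
Proof.
move=> sHG [s [ps lsG]].
pose meetH x := (H :&: x)%G.
have meetH1 : meetH 1%G = 1%G by apply: val_inj; rewrite /= setIg1.
have meetH_path x t :
    path (ss_step G) x t -> path (ss_wstep H) (meetH x) (map meetH t).
  elim: t x => [|y t IHt] x //= /andP[/and4P[nxG nyG sxy pr_ixy] /IHt ->].
  rewrite /ss_wstep !(normalGI sHG) ?setIS //= andbT.
  apply: dvdn_prime_eq1_or_prime pr_ixy (indexgI_dvdn _ sxy _).
  exact: subset_trans (normal_sub nyG) (normal_norm nxG).
apply: (@supersoluble_wseries _ (map meetH s)); first by rewrite -meetH1 meetH_path.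
by rewrite -meetH1 last_map /= lsG; apply/setIidPl.
Qed.

Lemma supersoluble_normal_prime G W : supersoluble G -> W <| G -> W :!=: 1 ->
  exists N, [/\ N <| G, N \subset W & prime #|N|].
Proof.
move=> [s [ps lsG]] nWG ntW.
suff: forall x t, path (ss_step G) x t -> (last x t : {set gT}) = G ->
  W :&: x = 1 -> exists N, [/\ N <| G, N \subset W & prime #|N|].
  by move/(_ 1%G s ps lsG); apply; rewrite setIg1.
move=> x t; elim: t x => [|y t IHt] x /=.
  move=> _ -> /eqP tiWG; case/negP: ntW.
  by rewrite (setIidPl (normal_sub nWG)) in tiWG.
case/andP=> /and4P[nxG nyG sxy pr_ixy] pt lt tiWx.
have [tiWy | ntWy] := eqVneq (W :&: y) 1; first exact: IHt tiWy.
exists (W :&: y)%G; split; rewrite ?normalI ?subsetIl //.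
have nxy : y \subset 'N(x) := subset_trans (normal_sub nyG) (normal_norm nxG).
have := dvdn_prime_eq1_or_prime pr_ixy (indexgI_dvdn W sxy nxy).
by rewrite tiWx indexg1 -trivg_card1 (negPf ntWy).
Qed.

Lemma supersoluble_sol G : supersoluble G -> solvable G.
Proof.
move=> [s [ps <-]]; have: solvable (1%G : {group gT}) by exact: solvable1.
elim: s 1%G ps => [|y s IHs] x //= /andP[/and4P[nxG nyG sxy pr_ixy] ps] solx.
apply: IHs ps _; have nxy : x <| y := normalS sxy (normal_sub nyG) nxG.
rewrite (series_sol nxy) solx abelian_sol ?cyclic_abelian ?prime_cyclic //.
by rewrite card_quotient ?normal_norm.
Qed.

Lemma supersoluble_normal_logn G p k : supersoluble G -> prime p ->
  (k <= logn p #|G|)%N -> exists2 M : {group gT}, M <| G & logn p #|M| = k.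
Proof.
move=> [s [ps lsG]] pr_p; rewrite -[in X in (_ <= X)%N]lsG.
have: (logn p #|(1%G : {group gT})| <= k)%N by rewrite cards1 logn1.
have: (1%G : {group gT}) <| G by exact: normal1.
elim: s 1%G ps {lsG} => [|y s IHs] x /=.
  by move=> _ nxG lx kx; exists x => //; apply/eqP; rewrite eqn_leq lx kx.
case/andP=> /and4P[_ nyG sxy pr_ixy] ps nxG lx k_le.
have [<- | ne_k] := eqVneq (logn p #|x|) k; first by exists x.
apply: IHs ps nyG _ k_le.
rewrite -(Lagrange sxy) lognM ?cardG_gt0 ?indexg_gt0 // (logn_prime _ pr_ixy).
by rewrite (leq_trans (leq_add (leqnn _) (leq_b1 _))) // addn1 ltn_neqAle ne_k lx.
Qed.

End SupersolubleSeries.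

Lemma supersoluble_quotient (gT : finGroupType) (G N : {group gT}) :
  N <| G -> supersoluble G -> supersoluble (G / N).
Proof.
move=> nNG [s [ps lsG]]; have nNG' := normal_norm nNG.
pose quoN x := (x / N)%G.
have quoN1 : quoN 1%G = 1%G by apply: val_inj; rewrite /= quotient1.
have quoN_path x t :
    path (ss_step G) x t -> path (ss_wstep (G / N)) (quoN x) (map quoN t).
  elim: t x => [|y t IHt] x //= /andP[/and4P[nxG nyG sxy pr_ixy] /IHt ->].
  rewrite /ss_wstep !quotient_normal ?quotientS //= andbT.
  apply: dvdn_prime_eq1_or_prime pr_ixy (index_quotient _).
  exact: subset_trans (subsetIl _ _) (subset_trans (normal_sub nyG) nNG').
apply: (@supersoluble_wseries _ _ (map quoN s)); first by rewrite -quoN1 quoN_path.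
by rewrite -quoN1 last_map /= lsG.
Qed.

Lemma supersoluble_prime_normal_ext (gT : finGroupType) (G N : {group gT}) :
  N <| G -> prime #|N| -> supersoluble (G / N) -> supersoluble G.
Proof.
move=> nNG pr_N [s [ps lsGN]].
pose preN (X : {group coset_of N}) := (coset N @*^-1 X)%G.
have preN1 : preN 1%G = N by apply: val_inj; rewrite /= cosetpre1.
have preN_path x t :
    path (ss_step (G / N)) x t -> path (ss_step G) (preN x) (map preN t).
  elim: t x => [|y t IHt] x //= /andP[/and4P[nxG nyG sxy pr_ixy] /IHt ->].
  rewrite /ss_step /preN /= -{1 2}(quotientGK nNG) !cosetpre_normal nxG nyG.
  by rewrite index_cosetpre pr_ixy andbT /= (morphpreS _ sxy).
exists (N :: map preN s); split.
  by rewrite /= -{2}preN1 preN_path // andbT /ss_step normal1 nNG sub1G indexg1.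
by rewrite /= -{1}preN1 last_map /= lsGN quotientGK.
Qed.

Lemma Sylow_normal_index_dvdn_prime (gT : finGroupType) (M P : {group gT}) p r :
  prime p -> prime r -> (r <= p)%N -> p.-Sylow(M) P ->
  (#|M : 'N_M(P)| %| r)%N -> P <| M.
Proof.
move=> pr_p pr_r le_rp sylP dv_r; have := card_Syl_mod M pr_p.
rewrite (card_Syl sylP); case/primeP: pr_r => r_gt1 /(_ _ dv_r)/orP[| /eqP->].
  by rewrite indexg_eq1 subsetI => /andP[_ nPM] _; rewrite /normal (pHall_sub sylP).
case: ltngtP le_rp => // [lt_rp | ->] _; last by rewrite modnn.
by rewrite modn_small // => r1; rewrite r1 in r_gt1.
Qed.

Lemma supersoluble_max_Sylow_normal (gT : finGroupType) (H P : {group gT}) p :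
  supersoluble H -> prime p -> (forall r, r \in \pi(H) -> r <= p)%N ->
  p.-Sylow(H) P -> P <| H.
Proof.
move=> ssH pr_p; have [n] := ubnP #|H|; elim: n gT H P ssH => // n IHn gT H P ssH.
rewrite ltnS => leHn maxp sylP; have sPH := pHall_sub sylP.
have [H1 | ntH] := eqVneq (H : {set gT}) 1; first by rewrite /normal sPH H1 sub1G.
have [N [nNH _ pr_N]] := supersoluble_normal_prime ssH (normal_refl H) ntH.
have nNP : P \subset 'N(N) := subset_trans sPH (normal_norm nNH).
have nPNHN : P / N <| H / N.
  apply: IHn (supersoluble_quotient nNH ssH) _ _ (quotient_pHall nNP sylP).
    by apply: leq_trans leHn; rewrite ltn_quotient ?normal_sub // -cardG_gt1 prime_gt1.
  by move=> r /(pi_of_dvd (dvdn_quotient _ _) (cardG_gt0 H)); apply: maxp.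
set M := (coset N @*^-1 (P / N))%G.
have nMH : M <| H by rewrite -(quotientGK nNH) cosetpre_normal.
have defM : M :=: P * N by rewrite /= quotientK // (normC nNP).
have sPM : P \subset M by rewrite defM mulG_subl.
have sylPM := pHall_subl sPM (normal_sub nMH) sylP.
have nPM : P <| M.
  apply: (Sylow_normal_index_dvdn_prime pr_p pr_N (maxp _ _) sylPM).
    by rewrite mem_primes pr_N cardG_gt0 cardSg ?normal_sub.
  have: (#|M : 'N_M(P)| %| #|M : P|)%N by rewrite indexgS // subsetI sPM normG.
  by move/dvdn_trans; apply; rewrite defM indexMg dvdn_indexg.
rewrite -(normal_Hall_pcore sylPM nPM).
exact: char_normal_trans (pcore_char _ _) nMH.
Qed.

Lemma supersoluble_prime_index_subgroup (gT : finGroupType) (G : {group gT}) p :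
  supersoluble G -> p \in \pi(G) ->
  exists H : {group gT}, [/\ H \subset G, supersoluble H & #|G : H| = p].
Proof.
move=> ssG piGp; have := piGp; rewrite mem_primes => /and3P[pr_p _ _].
set e := logn p #|G|; have e_gt0 : (0 < e)%N by rewrite /e logn_gt0.
have [M nMG lMe] := supersoluble_normal_logn ssG pr_p (leq_pred e).
have [L hallL] := Hall_exists p^' (supersoluble_sol ssG).
have nML : L \subset 'N(M) := subset_trans (pHall_sub hallL) (normal_norm nMG).
have sHG : M <*> L \subset G by rewrite join_subG normal_sub ?(pHall_sub hallL).
exists (M <*> L)%G; split => //; first exact: supersolubleS ssG.
have hallML : p^'.-Hall(M) (M :&: L) by rewrite setIC (Hall_setI_normal nMG hallL).
have cardH : #|M <*> L| = (p ^ e.-1 * #|G|`_p^')%N.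
  apply/eqP; rewrite -(eqn_pmul2r (part_gt0 p^' #|M|)) (norm_joinEr nML).
  rewrite -{1}(card_Hall hallML) -mul_cardG (card_Hall hallL).
  by rewrite -{1}(partnC p (cardG_gt0 M)) p_part lMe mulnAC.
apply/eqP; rewrite -(eqn_pmul2l (cardG_gt0 (M <*> L))) Lagrange // cardH.
by rewrite -{1}(partnC p (cardG_gt0 G)) p_part -/e -{1}(prednK e_gt0) expnSr mulnAC.
Qed.

Definition prime_index_supersoluble (gT : finGroupType) (G : {group gT}) : Prop :=
  forall p, p \in \pi(G) ->
    exists H : {group gT}, [/\ H \subset G, supersoluble H & #|G : H| = p].

Section PrimeIndexSupersoluble.

Variable gT : finGroupType.
Implicit Types (G H K N P S : {group gT}).

Lemma Sylow_p'index_sub G K S (p : nat) :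
  K \subset G -> p^'.-nat #|G : K| -> p.-Sylow(K) S -> p.-Sylow(G) S.
Proof.
move=> sKG p'iGK sylS; rewrite pHallE (subset_trans (pHall_sub sylS) sKG).
rewrite (card_Hall sylS) -(Lagrange sKG) partnM ?cardG_gt0 ?indexg_gt0 //.
by rewrite (part_p'nat p'iGK) muln1 eqxx.
Qed.

Lemma normal_Sylow_p'index_sub G K P (p : nat) :
  p.-Sylow(G) P -> P <| G -> K \subset G -> p^'.-nat #|G : K| -> P \subset K.
Proof.
move=> sylP nPG sKG p'iGK; have [S sylS] := Sylow_exists p K.
have sylSG := Sylow_p'index_sub sKG p'iGK sylS.
have sSP : S \subset P.
  by rewrite (sub_normal_Hall sylP nPG) ?(pHall_sub sylSG) ?(pHall_pgroup sylS).
have defP := sub_pHall sylSG (pHall_pgroup sylP) sSP (pHall_sub sylP).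
by rewrite defP (pHall_sub sylS).
Qed.

Lemma prime_index_supersoluble_quotient G N : N <| G ->
  (forall r, r \in \pi(G / N) ->
     exists K, [/\ K \subset G, supersoluble K, #|G : K| = r & N \subset K]) ->
  prime_index_supersoluble (G / N).
Proof.
move=> nNG hypGN r /hypGN[K [sKG ssK iGK sNK]].
exists (K / N)%G; split; rewrite ?quotientS //.
  exact: supersoluble_quotient (normalS sNK sKG nNG) ssK.
by rewrite index_quotient_eq ?normal_norm // (subset_trans (subsetIr G N) sNK).
Qed.

Lemma prime_index_supersoluble_max_Sylow_normal G P p :
  prime_index_supersoluble G -> prime p -> (forall r, r \in \pi(G) -> r <= p)%N ->
  p.-Sylow(G) P -> P <| G.
Proof.
move=> hypG pr_p maxp sylP; have [sPG _ p'iGP] := and3P sylP.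
have [iGP_le1 | iGP_gt1] := leqP #|G : P| 1.
  have sGP : G \subset P by rewrite -indexg_eq1 eqn_leq iGP_le1 indexg_gt0.
  by rewrite /normal sPG (subset_trans sGP (normG P)).
pose q := pdiv #|G : P|; have pr_q : prime q := pdiv_prime iGP_gt1.
have piGq : q \in \pi(G).
  by rewrite (pi_of_dvd (dvdn_indexg G P)) ?cardG_gt0 // pi_pdiv.
have p'q : q \in p^' by apply: pnatPpi p'iGP _; rewrite pi_pdiv.
have [H [sHG ssH iGH]] := hypG q piGq.
have [S sylS] := Sylow_exists p H.
have sylSG : p.-Sylow(G) S by apply: Sylow_p'index_sub sHG _ sylS; rewrite iGH pnatE.
have nSH : S <| H.
  apply: supersoluble_max_Sylow_normal ssH pr_p _ sylS => r piHr.
  by apply/maxp/(piSg sHG).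
have nSG : S <| G.
  apply: Sylow_normal_index_dvdn_prime pr_p pr_q (maxp q piGq) sylSG _.
  by rewrite -iGH indexgS // subsetI sHG normal_norm.
have sPS : P \subset S by rewrite (sub_normal_Hall sylSG nSG sPG) (pHall_pgroup sylP).
by rewrite -(sub_pHall sylP (pHall_pgroup sylSG) sPS (pHall_sub sylSG)).
Qed.

Lemma normal_prime_sub_Sylow_index_prime G H P p :
  prime p -> p.-Sylow(G) P -> P <| G -> H \subset G -> supersoluble H ->
  #|G : H| = p -> #|P| != p -> exists N, [/\ N <| G, N \subset P :&: H & prime #|N|].
Proof.
move=> pr_p sylP nPG sHG ssH iGH nPp; have pP := pHall_pgroup sylP.
have sylPH : p.-Sylow(H) (P :&: H) := setI_normal_Hall nPG sylP sHG.
have cardP : #|P| = (#|P :&: H| * p)%N.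
  rewrite (card_Hall sylP) (card_Hall sylPH) -(Lagrange sHG) iGH.
  by rewrite partnM ?cardG_gt0 ?prime_gt0 // (part_pnat_id (pnat_id pr_p)).
have iPH : #|P : P :&: H| = p.
  by apply/eqP; rewrite -(eqn_pmul2l (cardG_gt0 (P :&: H))) Lagrange ?subsetIl // cardP.
have defG : P * H = G.
  apply/eqP; rewrite eqEcard mul_subG ?(pHall_sub sylP) //=.
  rewrite -(leq_pmul2r (cardG_gt0 (P :&: H))) -mul_cardG cardP -(Lagrange sHG) iGH.
  by rewrite mulnC mulnA mulnAC.
have ntPH : P :&: H != 1.
  by apply: contraNneq nPp => tiPH; rewrite cardP tiPH cards1 mul1n.
have nPHP : P :&: H <| P.
  by apply/(p_maximal_normal pP)/p_index_maximal; rewrite ?subsetIl ?iPH.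
have ntHZ : (H :&: 'Z(P))%G :!=: 1.
  apply: contraNneq (meet_center_nil (pgroup_nil pP) nPHP ntPH) => /= tiHZ.
  by rewrite -subG1 -tiHZ setSI ?subsetIr.
have nHZH : H :&: 'Z(P) <| H.
  exact: normalGI sHG (char_normal_trans (center_char P) nPG).
have [N [nNH sNHZ pr_N]] := supersoluble_normal_prime ssH nHZH ntHZ.
have [sNH sNZ] : N \subset H /\ N \subset 'Z(P) by apply/andP; rewrite -subsetI.
have sNP : N \subset P := subset_trans sNZ (center_sub P).
exists N; split; rewrite ?subsetI ?sNP //.
rewrite /normal (subset_trans sNP (normal_sub nPG)) -defG mul_subG ?(normal_norm nNH) //.
by rewrite cents_norm // centsC (subset_trans sNZ) ?subsetIr.
Qed.

Lemma prime_index_supersoluble_prime_normal G :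
  prime_index_supersoluble G -> G :!=: 1 ->
  exists N, [/\ N <| G, prime #|N| & prime_index_supersoluble (G / N)].
Proof.
move=> hypG ntG; have G_gt1 : (1 < #|G|)%N by rewrite cardG_gt1.
pose p := max_pdiv #|G|; have pr_p : prime p := max_pdiv_prime G_gt1.
have [P sylP] := Sylow_exists p G; have [_ _ p'iGP] := and3P sylP.
have nPG : P <| G.
  exact: prime_index_supersoluble_max_Sylow_normal hypG pr_p (@max_pdiv_max _) sylP.
have [H [sHG ssH iGH]] := hypG p (etrans (pi_max_pdiv _) G_gt1).
have hypG_p' r : r \in \pi(G) -> r != p ->
    exists K, [/\ K \subset G, supersoluble K, #|G : K| = r & P \subset K].
  move=> piGr r_p; have [K [sKG ssK iGK]] := hypG r piGr.
  exists K; split; rewrite // (normal_Sylow_p'index_sub sylP nPG sKG) // iGK.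
  by move: piGr; rewrite mem_primes => /andP[pr_r _]; rewrite pnatE // !inE.
have piG_quo (M : {group gT}) : {subset \pi(G / M) <= \pi(G)}.
  exact: pi_of_dvd (dvdn_quotient G M) (cardG_gt0 G).
have [Pp | nPp] := eqVneq #|P| p.
  exists P; split; rewrite ?Pp //; apply: (prime_index_supersoluble_quotient nPG).
  move=> r piGPr; apply: hypG_p' (piG_quo _ _ piGPr) _.
  have p'GP : p^'.-nat #|G / P| by rewrite card_quotient ?normal_norm.
  by have := pnatPpi p'GP piGPr; rewrite !inE.
have [N [nNG sNPH pr_N]] :=
  normal_prime_sub_Sylow_index_prime pr_p sylP nPG sHG ssH iGH nPp.
have [sNP sNH] : N \subset P /\ N \subset H by apply/andP; rewrite -subsetI.
exists N; split => //; apply: (prime_index_supersoluble_quotient nNG).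
move=> r /piG_quo piGr; have [-> | r_p] := eqVneq r p; first by exists H.
have [K [sKG ssK iGK sPK]] := hypG_p' r piGr r_p.
by exists K; split; rewrite // (subset_trans sNP sPK).
Qed.

End PrimeIndexSupersoluble.

Lemma prime_index_supersoluble_supersoluble (gT : finGroupType) (G : {group gT}) :
  prime_index_supersoluble G -> supersoluble G.
Proof.
have [n] := ubnP #|G|; elim: n gT G => // n IHn gT G; rewrite ltnS => leGn hypG.
have [G1 | ntG] := eqVneq (G : {set gT}) 1; first by exists [::]; rewrite G1.
have [N [nNG pr_N hypGN]] := prime_index_supersoluble_prime_normal hypG ntG.
apply: (supersoluble_prime_normal_ext nNG pr_N (IHn _ _ _ hypGN)).
by apply: leq_trans leGn; rewrite ltn_quotient ?normal_sub // -cardG_gt1 prime_gt1.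
Qed.

Theorem theorem1 (gT : finGroupType) (G : {group gT}) :
  supersoluble G <->
  (forall p : nat, p \in \pi(G) ->
     exists H : {group gT}, [/\ H \subset G, supersoluble H & #|G : H| = p]).
Proof.
split=> [ssG p | ]; first exact: supersoluble_prime_index_subgroup.
exact: prime_index_supersoluble_supersoluble.
Qed.
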